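(* Let $P=MN\supset T$ be a maximal parabolic subgroup of $G=\mathrm{GL}_d$, $U\subset N(F)$ and $H\subset M(F)$ open and closed subgroups with $H$ normalizing $U$, and let $\mathfrak{u}$ be the Lie algebra of $U$. Let $X$ be an $H$-orbit in $\mathscr{X}^M$. Then $\dim_k\big(\mathfrak{u}/(\mathfrak{u}\cap\mathrm{Ad}(g)\mathfrak{g}(\mathcal{O}))\big)$ is independent of $g$ for $gK\in X$.
   Context: $k$ algebraically closed, $F=k((\epsilon))$, $\mathcal{O}=k[[\epsilon]]$, $G=\mathrm{GL}_d$, $T$ diagonal torus, $K=G(\mathcal{O})$, $\mathscr{X}=G(F)/K$. $P=MN$ is a Levi decomposition with $M\supset T$; $\mathscr{X}^M=M(F)/M(\mathcal{O})$ is embedded in $\mathscr{X}$ via $mM(\mathcal{O})\mapsto mK$. *)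

From HB Require Import structures.
From mathcomp Require Import all_boot all_order all_algebra.
From mathcomp Require Import boolp.
From mathcomp Require Import zify.

Set Implicit Arguments.
Unset Strict Implicit.
Unset Printing Implicit Defensive.

Import Order.TTheory GRing.Theory.
Local Open Scope ring_scope.

Section PowerSeries.
Variable R : idomainType.

Record pser := Pser { pcoef : nat -> R }.

HB.instance Definition _ := gen_eqMixin pser.
HB.instance Definition _ := gen_choiceMixin pser.

Lemma pserP (a b : pser) : (forall n, pcoef a n = pcoef b n) -> a = b.
Proof.
case: a => f; case: b => g /= H; congr Pser; apply/funext => n; exact: H.
Qed.

Definition ps_zero := Pser (fun _ => 0).
Definition ps_add a b := Pser (fun n => pcoef a n + pcoef b n).
Definition ps_opp a := Pser (fun n => - pcoef a n).

Fact ps_addA : associative ps_add.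
Proof. by move=> a b c; apply: pserP => n /=; rewrite addrA. Qed.
Fact ps_addC : commutative ps_add.
Proof. by move=> a b; apply: pserP => n /=; rewrite addrC. Qed.
Fact ps_add0 : left_id ps_zero ps_add.
Proof. by move=> a; apply: pserP => n /=; rewrite add0r. Qed.
Fact ps_addN : left_inverse ps_zero ps_opp ps_add.
Proof. by move=> a; apply: pserP => n /=; rewrite addNr. Qed.

HB.instance Definition _ := GRing.isZmodule.Build pser ps_addA ps_addC ps_add0 ps_addN.

Definition ps_trunc (a : pser) n : {poly R} := \poly_(i < n.+1) pcoef a i.

Lemma ps_truncE a n i : (i <= n)%N -> (ps_trunc a n)`_i = pcoef a i.
Proof. by move=> hi; rewrite coef_poly ltnS hi. Qed.

Definition ps_one := Pser (fun n => (n == 0)%:R).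
Definition ps_mul a b := Pser (fun n => (ps_trunc a n * ps_trunc b n)`_n).

Lemma ps_mul_agree (p q : {poly R}) a b n :
  (forall i, (i <= n)%N -> p`_i = pcoef a i) ->
  (forall i, (i <= n)%N -> q`_i = pcoef b i) ->
  (p * q)`_n = pcoef (ps_mul a b) n.
Proof.
move=> hp hq; rewrite /= !coefM; apply: eq_bigr => [[i hi]] _ /=.
rewrite ltnS in hi.
by rewrite hp // hq ?leq_subr // !ps_truncE ?leq_subr.
Qed.

Fact ps_mulA : associative ps_mul.
Proof.
move=> a b c; apply: pserP => n.
rewrite -(@ps_mul_agree (ps_trunc a n) (ps_trunc b n * ps_trunc c n)); last 2 first.
- by move=> i hi; rewrite ps_truncE.
- move=> i hi; apply: ps_mul_agree => j hj; rewrite ps_truncE //; exact: leq_trans hi.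
rewrite -(@ps_mul_agree (ps_trunc a n * ps_trunc b n) (ps_trunc c n)); last 2 first.
- move=> i hi; apply: ps_mul_agree => j hj; rewrite ps_truncE //; exact: leq_trans hi.
- by move=> i hi; rewrite ps_truncE.
by rewrite mulrA.
Qed.

Fact ps_mulC : commutative ps_mul.
Proof. by move=> a b; apply: pserP => n /=; rewrite mulrC. Qed.

Fact ps_mul1 : left_id ps_one ps_mul.
Proof.
move=> a; apply: pserP => n.
rewrite -(@ps_mul_agree 1 (ps_trunc a n)).
- by rewrite mul1r ps_truncE.
- by move=> i _; rewrite coef1.
- by move=> i hi; rewrite ps_truncE.
Qed.

Fact ps_mulDl : left_distributive ps_mul ps_add.
Proof.
move=> a b c; apply: pserP => n.
rewrite -(@ps_mul_agree (ps_trunc a n + ps_trunc b n) (ps_trunc c n)).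
- by rewrite mulrDl coefD.
- by move=> i hi; rewrite coefD !ps_truncE.
- by move=> i hi; rewrite ps_truncE.
Qed.

Fact ps_one_neq0 : ps_one != ps_zero.
Proof.
apply/negP => /eqP h; have := congr1 (fun x => pcoef x 0) h => /=.
by move/eqP; rewrite oner_eq0.
Qed.

HB.instance Definition _ :=
  GRing.Zmodule_isComNzRing.Build pser ps_mulA ps_mulC ps_mul1 ps_mulDl ps_one_neq0.

Definition ps_unit : {pred pser} := fun x => `[< exists y : pser, y * x = 1 >].
Definition ps_inv (x : pser) : pser :=
  match pselect (exists y : pser, y * x = 1) with
  | left h => projT1 (cid h)
  | right _ => x
  end.

Fact ps_mulVx : {in ps_unit, left_inverse 1 ps_inv *%R}.
Proof.
move=> x hx; rewrite /ps_inv.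
by case: pselect => [h|h]; [case: (cid h) | exfalso; apply: h; apply/asboolP].
Qed.

Fact ps_unitPl (x y : pser) : y * x = 1 -> ps_unit x.
Proof. by move=> h; apply/asboolP; exists y. Qed.

Fact ps_inv_out : {in [predC ps_unit], ps_inv =1 id}.
Proof.
move=> x hx; rewrite /ps_inv; case: pselect => // h.
by exfalso; move: hx; rewrite inE /= => /negP; apply; apply/asboolP.
Qed.

HB.instance Definition _ :=
  GRing.ComNzRing_hasMulInverse.Build pser ps_mulVx ps_unitPl ps_inv_out.

Lemma ps_mulE (a b : pser) n :
  pcoef (a * b) n = \sum_(i < n.+1) pcoef a i * pcoef b (n - i).
Proof.
rewrite /= coefM; apply: eq_bigr => [[i hi]] _ /=.
by rewrite ltnS in hi; rewrite !ps_truncE ?leq_subr.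
Qed.

Fact ps_integral : GRing.integral_domain_axiom pser.
Proof.
move=> x y hxy.
case: (eqVneq x 0) => [hx0|hx]; first by apply/orP; left; apply/eqP.
case: (eqVneq y 0) => [hy0|hy]; first by apply/orP; right; apply/eqP.
exfalso.
have ex : exists i, pcoef x i != 0.
  case: (pselect (exists i, pcoef x i != 0)) => // h; exfalso.
  move/eqP: hx; apply; apply: pserP => n /=; apply/eqP.
  by apply/negPn/negP => hn; apply: h; exists n.
have ey : exists j, pcoef y j != 0.
  case: (pselect (exists i, pcoef y i != 0)) => // h; exfalso.
  move/eqP: hy; apply; apply: pserP => n /=; apply/eqP.
  by apply/negPn/negP => hn; apply: h; exists n.
pose i := ex_minn ex; pose j := ex_minn ey.
have [xi mi] : pcoef x i != 0 /\ forall l, pcoef x l != 0 -> (i <= l)%N.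
  by rewrite /i; case: ex_minnP.
have [yj mj] : pcoef y j != 0 /\ forall l, pcoef y l != 0 -> (j <= l)%N.
  by rewrite /j; case: ex_minnP.
have := congr1 (fun z => pcoef z (i + j)) hxy; rewrite ps_mulE /=.
have hi : (i < (i + j).+1)%N by rewrite ltnS leq_addr.
rewrite (bigD1 (Ordinal hi)) //= big1 ?addr0.
  by rewrite addKn => /eqP; rewrite mulf_eq0 (negbTE xi) (negbTE yj).
move=> [l hl] /= hneq.
have {}hneq : l != i by apply: contra hneq => /eqP e; apply/eqP/val_inj.
case: (ltngtP l i) hneq => // hli _.
- have : pcoef x l == 0 by apply: contraLR hli; rewrite -leqNgt => /mi.
  by move/eqP ->; rewrite mul0r.
- have : pcoef y (i + j - l) == 0.
    apply: contraLR hli; rewrite -leqNgt => /mj h2.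
    by move: h2 hl; rewrite ltnS; lia.
  by move/eqP ->; rewrite mulr0.
Qed.

HB.instance Definition _ := GRing.ComUnitRing_isIntegral.Build pser ps_integral.

Definition ps_eps : pser := Pser (fun n => (n == 1)%:R).
Definition ps_const (c : R) : pser := Pser (fun n => if n == 0 then c else 0).

End PowerSeries.

(* The field of formal Laurent series k((eps)), realised as the fraction
   field of the power series ring O = k[[eps]]. *)
Notation Laurent k := {fraction pser k}.

Section GLd.
Variables (k : idomainType) (d : nat).
Local Notation F := (Laurent k).
Local Notation mat := 'M[F]_d.

Definition Fconst (c : k) : F := tofrac (ps_const c).
Definition kscale (c : k) (X : mat) : mat := Fconst c *: X.

Definition in_epsO (m : nat) (x : F) : Prop :=
  exists a : pser k, x = tofrac (ps_eps k ^+ m * a).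
(* the matrix Y lies in eps^m gl_d(O); for m = 0 this is g(O) = gl_d(O) *)
Definition mat_epsO (m : nat) (Y : mat) : Prop := forall i j, in_epsO m (Y i j).

Definition inGL (g : mat) : Prop := g \in unitmx.
Definition inK (g : mat) : Prop := inGL g /\ mat_epsO 0 g /\ mat_epsO 0 (invmx g).

(* The maximal parabolic P = MN containing the diagonal torus T is the
   stabiliser of the coordinate subspace V_I = span(e_i, i in I), for a
   nonempty proper subset I of {0..d-1}; its Levi M containing T is the
   stabiliser of V_I and V_{I^c} (block diagonal), N its unipotent radical. *)
Definition inM (I : {set 'I_d}) (g : mat) : Prop :=
  inGL g /\ forall i j, (i \in I) != (j \in I) -> g i j = 0.
Definition in_nlie (I : {set 'I_d}) (X : mat) : Prop :=
  forall i j, ~~ ((i \in I) && (j \notin I)) -> X i j = 0.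
Definition inN (I : {set 'I_d}) (g : mat) : Prop := in_nlie I (g - 1%:M).

(* eps-adic topology (subspace topology from F^(d*d)), relative to an
   ambient set A: S is open in A if each point g of S has a neighbourhood
   (g + eps^m gl_d(O)) /\ A contained in S; closed in A if A \ S is open in A. *)
Definition open_in (A S : mat -> Prop) : Prop :=
  forall g, S g -> exists m : nat, forall Y, mat_epsO m Y -> A (g + Y) -> S (g + Y).
Definition closed_in (A S : mat -> Prop) : Prop :=
  open_in A (fun g => A g /\ ~ S g).

Definition is_subgroup (S : mat -> Prop) : Prop :=
  [/\ S 1%:M, (forall g h, S g -> S h -> S (g *m h)) & (forall g, S g -> S (invmx g))].

(* Lie algebra of a subgroup U of the vector group N(F) = 1 + n(F):
   the k-subspace of those X in n(F) with 1 + cX in U for all c in k. *)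
Definition lie_of_unip (I : {set 'I_d}) (U : mat -> Prop) (X : mat) : Prop :=
  in_nlie I X /\ forall c : k, U (1%:M + kscale c X).

Definition Ad_gO (g X : mat) : Prop :=
  exists Y, mat_epsO 0 Y /\ X = g *m Y *m invmx g.

(* dim_k (V / W) >= n  (V, W k-subspaces of gl_d(F), W inside V) *)
Definition quot_dim_ge (V W : mat -> Prop) (n : nat) : Prop :=
  exists x : 'I_n -> mat, (forall i, V (x i)) /\
    forall c : 'I_n -> k, W (\sum_(i < n) kscale (c i) (x i)) -> forall i, c i = 0.

(* dim_k (V / W1) = dim_k (V / W2)  as elements of N u {oo} *)
Definition quot_dim_eq (V W1 W2 : mat -> Prop) : Prop :=
  forall n, quot_dim_ge V W1 n <-> quot_dim_ge V W2 n.

(* gK lies in the image in G(F)/K of the H-orbit of m0 M(O) in M(F)/M(O),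
   i.e. gK = h m0 K for some h in H. *)
Definition in_Horbit (H : mat -> Prop) (m0 g : mat) : Prop :=
  exists h, H h /\ inK (invmx g *m (h *m m0)).

End GLd.

(* Any two points gK, g'K of the same H-orbit satisfy g' = h g k with h in H
   and k in K.  Since K stabilises g(O), Ad(g') g(O) = Ad(h) Ad(g) g(O); and
   Ad(h) maps u onto itself because H normalises U and the Levi M normalises
   n.  So the k-linear automorphism Ad(h) of u carries u /\ Ad(g) g(O) onto
   u /\ Ad(g') g(O), and the two quotients have the same dimension. *)
From HB Require Import structures.
From mathcomp Require Import all_boot all_order all_algebra.
Set Implicit Arguments.
Unset Strict Implicit.
Unset Printing Implicit Defensive.
Import GRing.Theory.
Local Open Scope ring_scope.

Section Adjoint.
Variables (R : comUnitRingType) (n : nat).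
Implicit Types g h X Y : 'M[R]_n.

Lemma invmxM g h : g \in unitmx -> h \in unitmx ->
  invmx (g *m h) = invmx h *m invmx g.
Proof.
move=> ug uh; have ugh : g *m h \in unitmx by rewrite unitmx_mul ug uh.
apply: (can_inj (mulKmx ugh)).
by rewrite mulmxV // -mulmxA (mulmxA h) mulmxV // mul1mx mulmxV.
Qed.

Definition Ad g X := g *m X *m invmx g.

Fact Ad_is_linear g : linear (Ad g).
Proof. by move=> c X Y; rewrite /Ad mulmxDr mulmxDl -scalemxAr -scalemxAl. Qed.

HB.instance Definition _ g :=
  GRing.isLinear.Build R 'M[R]_n 'M[R]_n *:%R (Ad g) (Ad_is_linear g).

Lemma Ad1 g : g \in unitmx -> Ad g 1%:M = 1%:M.
Proof. by move=> ug; rewrite /Ad mulmx1 mulmxV. Qed.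

Lemma AdM g h : g \in unitmx -> h \in unitmx ->
  forall X, Ad (g *m h) X = Ad g (Ad h X).
Proof. by move=> ug uh X; rewrite /Ad invmxM // !mulmxA. Qed.

Lemma AdK g : g \in unitmx -> cancel (Ad g) (Ad (invmx g)).
Proof.
by move=> ug X; rewrite -AdM ?unitmx_inv // mulVmx // /Ad mul1mx invmx1 mulmx1.
Qed.

Lemma AdVK g : g \in unitmx -> cancel (Ad (invmx g)) (Ad g).
Proof. by move=> ug X; rewrite -{1}(invmxK g) AdK ?unitmx_inv. Qed.

Definition transporter g' h g := invmx g' *m (h *m g).

Lemma mulmx_transporter g' h g : g' \in unitmx -> g' *m transporter g' h g = h *m g.
Proof. by move=> ug'; rewrite mulKVmx. Qed.

Lemma transporterV g' h g : g' \in unitmx -> h \in unitmx -> g \in unitmx ->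
  invmx (transporter g' h g) = transporter g (invmx h) g'.
Proof.
move=> ug' uh ug; rewrite /transporter !invmxM ?unitmx_mul ?unitmx_inv ?uh //.
by rewrite invmxK mulmxA.
Qed.

Lemma transporter_div g1 g2 h1 h2 m : g1 \in unitmx -> h1 \in unitmx -> m \in unitmx ->
  transporter g2 (h2 *m invmx h1) g1 =
  transporter g2 h2 m *m invmx (transporter g1 h1 m).
Proof.
move=> ug1 uh1 um; rewrite /transporter !invmxM ?unitmx_mul ?unitmx_inv ?uh1 //.
by rewrite invmxK !mulmxA mulmxK // -!mulmxA.
Qed.

End Adjoint.

Section IntegralMatrices.
Variables (k : idomainType) (d : nat).
Local Notation mat := 'M[Laurent k]_d.
Implicit Types g h X : mat.

(* Unit side conditions below are closed from hypotheses, never by [//]: over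
   [Laurent k], [done] would try to evaluate [unitmx] by computation. *)

Lemma in_epsO0E (x : Laurent k) : in_epsO 0 x <-> exists a : pser k, x = tofrac a.
Proof. by split=> -[a ->]; exists a; rewrite expr0 mul1r. Qed.

Lemma mat_epsO0_mul g h : mat_epsO 0 g -> mat_epsO 0 h -> mat_epsO 0 (g *m h).
Proof.
move=> hg hh i j; rewrite mxE; apply: (big_ind (in_epsO 0)).
- by apply/in_epsO0E; exists 0; rewrite tofrac0.
- move=> x y /in_epsO0E[a ->] /in_epsO0E[b ->].
  by apply/in_epsO0E; exists (a + b); rewrite tofracD.
- move=> l _; have /in_epsO0E[a ->] := hg i l; have /in_epsO0E[b ->] := hh l j.
  by apply/in_epsO0E; exists (a * b); rewrite tofracM.
Qed.

Lemma inK_mul g h : inK g -> inK h -> inK (g *m h).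
Proof.
move=> [ug [g0 g'0]] [uh [h0 h'0]]; split; first by rewrite /inGL unitmx_mul ug uh.
rewrite (invmxM ug uh).
split; exact: mat_epsO0_mul.
Qed.

Lemma inK_inv g : inK g -> inK (invmx g).
Proof. by move=> [ug [g0 g'0]]; rewrite /inK /inGL unitmx_inv invmxK. Qed.

Lemma Ad_gOE g X : Ad_gO g X <-> exists2 Y, mat_epsO 0 Y & X = Ad g Y.
Proof. by split=> [[Y [Y0 ->]] | [Y Y0 ->]]; exists Y; rewrite /Ad. Qed.

Lemma Ad_gO_mulr g c X : inGL g -> inK c -> Ad_gO g X -> Ad_gO (g *m c) X.
Proof.
move=> ug [uc [c0 c'0]] /Ad_gOE[Y Y0 ->]; apply/Ad_gOE; exists (Ad (invmx c) Y).
  by rewrite /Ad invmxK; apply: mat_epsO0_mul; [apply: mat_epsO0_mul|].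
by rewrite (AdM ug uc) (AdVK uc).
Qed.

Lemma Ad_gO_Ad h g X : h \in unitmx -> inGL g ->
  Ad_gO g X -> Ad_gO (h *m g) (Ad h X).
Proof.
move=> uh ug /Ad_gOE[Y Y0 ->]; apply/Ad_gOE; exists Y; first exact: Y0.
by rewrite (AdM uh ug).
Qed.

Lemma Ad_gO_transporter g g' h X : inGL g -> inGL g' -> h \in unitmx ->
  inK (transporter g' h g) -> Ad_gO g X -> Ad_gO g' (Ad h X).
Proof.
move=> ug ug' uh c_K /(Ad_gO_Ad uh ug); rewrite -(mulmx_transporter h g ug').
have [uc _] := c_K; have ug'c : inGL (g' *m transporter g' h g).
  by rewrite /inGL unitmx_mul ug' uc.
by move=> /Ad_gO_mulr-/(_ _ ug'c (inK_inv c_K)); rewrite (mulmxK uc).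
Qed.

Lemma in_nlie_mul_block (I : {set 'I_d}) g h X :
  (forall i j, (i \in I) != (j \in I) -> g i j = 0) ->
  (forall i j, (i \in I) != (j \in I) -> h i j = 0) ->
  in_nlie I X -> in_nlie I (g *m X *m h).
Proof.
move=> gM hM nX i j ij; rewrite mxE big1 // => b _; rewrite mxE big_distrl /=.
rewrite big1 // => a _.
have [ia|/gM ->] := eqVneq (i \in I) (a \in I); last by rewrite !mul0r.
have [bj|/hM ->] := eqVneq (b \in I) (j \in I); last by rewrite mulr0.
by rewrite nX ?mulr0 ?mul0r // -ia bj.
Qed.

Lemma quot_dim_ge_linear (V W1 W2 : mat -> Prop) (f : {linear mat -> mat}) n :
  (forall X, V X -> V (f X)) -> (forall X, W2 (f X) -> W1 X) ->
  quot_dim_ge V W1 n -> quot_dim_ge V W2 n.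
Proof.
move=> fV fW [x [Vx free_x]]; exists (f \o x); split=> [i|c]; first exact: fV.
move=> W2c; apply: free_x; apply: fW.
by rewrite linear_sum; under eq_bigr do rewrite /kscale linearZ.
Qed.

End IntegralMatrices.

Section Orbit.
Variables (k : idomainType) (d : nat) (I : {set 'I_d}) (U H : 'M[Laurent k]_d -> Prop).
Hypothesis H_M : forall h, H h -> inM I h.
Hypothesis H_subgroup : is_subgroup H.
Hypothesis H_normalises_U : forall h u, H h -> U u -> U (h *m u *m invmx h).

Lemma H_unit h : H h -> h \in unitmx.
Proof. by case/H_M. Qed.

Lemma lie_of_unip_Ad h X : H h -> lie_of_unip I U X -> lie_of_unip I U (Ad h X).
Proof.
move=> Hh [nX UX]; have [_ _ H_inv] := H_subgroup; split.
  by apply: in_nlie_mul_block nX; [case: (H_M Hh) | case: (H_M (H_inv _ Hh))].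
move=> c; rewrite /kscale -(Ad1 (H_unit Hh)) -linearZ -linearD.
rewrite /Ad; exact: H_normalises_U Hh (UX c).
Qed.

Lemma in_Horbit_connect m0 g1 g2 : m0 \in unitmx -> inGL g1 ->
  in_Horbit H m0 g1 -> in_Horbit H m0 g2 ->
  exists2 h, H h & inK (transporter g2 h g1).
Proof.
move=> um ug1 [h1 [H1 K1]] [h2 [H2 K2]]; have [_ H_mul H_inv] := H_subgroup.
exists (h2 *m invmx h1); first by apply: H_mul => //; apply: H_inv.
rewrite (transporter_div _ _ ug1 (H_unit H1) um); exact: inK_mul K2 (inK_inv K1).
Qed.

Lemma quot_dim_ge_Horbit g g' h n : inGL g -> inGL g' -> H h ->
  inK (transporter g' h g) ->
  quot_dim_ge (lie_of_unip I U) (fun X => lie_of_unip I U X /\ Ad_gO g X) n ->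
  quot_dim_ge (lie_of_unip I U) (fun X => lie_of_unip I U X /\ Ad_gO g' X) n.
Proof.
move=> ug ug' Hh c_K; have [_ _ H_inv] := H_subgroup; have uh := H_unit Hh.
apply: (quot_dim_ge_linear (f := Ad h)) => [X|X [lX aX]]; first exact: lie_of_unip_Ad.
rewrite -(AdK uh X); split; first exact: lie_of_unip_Ad (H_inv _ Hh) lX.
apply: (Ad_gO_transporter ug' ug) aX; first by rewrite unitmx_inv.
by rewrite -(transporterV ug' uh ug); apply: inK_inv.
Qed.

End Orbit.

Theorem mainTheorem16 (k : closedFieldType) (d : nat) (I : {set 'I_d})
    (U H : 'M[Laurent k]_d -> Prop) :
  I != set0 -> I != setT ->
  (forall u, U u -> inN I u) -> is_subgroup U ->
  open_in (inN I) U -> closed_in (inN I) U ->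
  (forall h, H h -> inM I h) -> is_subgroup H ->
  open_in (inM I) H -> closed_in (inM I) H ->
  (forall h u, H h -> U u -> U (h *m u *m invmx h)) ->
  forall m0 : 'M[Laurent k]_d, inM I m0 ->
  forall g1 g2 : 'M[Laurent k]_d, inGL g1 -> inGL g2 ->
  in_Horbit H m0 g1 -> in_Horbit H m0 g2 ->
  quot_dim_eq (lie_of_unip I U)
    (fun X => lie_of_unip I U X /\ Ad_gO g1 X)
    (fun X => lie_of_unip I U X /\ Ad_gO g2 X).
Proof.
move=> _ _ _ _ _ _ H_M H_sub _ _ H_U m0 [um _] g1 g2 ug1 ug2 orb1 orb2 n.
have [h Hh c_K] := in_Horbit_connect H_M H_sub um ug1 orb1 orb2.
have [_ _ H_inv] := H_sub; have uh := H_unit H_M Hh.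
have c'_K : inK (transporter g1 (invmx h) g2).
  by rewrite -(transporterV ug2 uh ug1); apply: inK_inv.
split; [apply: (quot_dim_ge_Horbit H_M H_sub H_U ug1 ug2 Hh c_K) |
        apply: (quot_dim_ge_Horbit H_M H_sub H_U ug2 ug1 (H_inv _ Hh) c'_K)].
Qed.
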